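(* Let $q_1,q_2,q_3\in(0,1)$ with $q_1+q_2+q_3=1$. On $\mathbb{C}^6$ with basis $\{|0\rangle,\dots,|5\rangle\}$ let $\overline{L}_1=\mathbb{I}_6$, and let $\overline{L}_2$, $\overline{L}_3$, $\overline{S}_1$, $\overline{S}_2$, $\overline{S}_3$ be the permutation unitaries that swap $|0\rangle$ with $|1\rangle$, $|2\rangle$, $|3\rangle$, $|4\rangle$, $|5\rangle$ respectively and fix all other basis vectors. Define the noisy unitary channels $\overline{\mathcal{L}}(\rho)=\sum_{k=1}^3 q_k\overline{L}_k\rho\overline{L}_k^\dagger$ and $\overline{\mathcal{S}}(\rho)=\sum_{k=1}^3 q_k\overline{S}_k\rho\overline{S}_k^\dagger$. Then for discriminating $\overline{\mathcal{L}}$ and $\overline{\mathcal{S}}$, a single-system probe is better than a maximally entangled probe: there is a state $\rho$ on $\mathbb{C}^6$ such that for every maximally entangled state $|\Psi\rangle\in\mathbb{C}^6\otimes\mathbb{C}^6$, $$\tfrac12+\tfrac14\|\overline{\mathcal{L}}(\rho)-\overline{\mathcal{S}}(\rho)\|_1>\tfrac12+\tfrac14\|(\overline{\mathcal{L}}\otimes\mathrm{id})(|\Psi\rangle\langle\Psi|)-(\overline{\mathcal{S}}\otimes\mathrm{id})(|\Psi\rangle\langle\Psi|)\|_1.$$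
   Context: For two channels chosen with equal priors $1/2$, the single-shot success probability with a single-system probe $\rho$ is $\frac12+\frac14\|\mathcal{N}_1(\rho)-\mathcal{N}_2(\rho)\|_1$, and with a bipartite probe $\rho_{AB}$ (channel on $A$) it is $\frac12+\frac14\|(\mathcal{N}_1\otimes\mathrm{id})(\rho_{AB})-(\mathcal{N}_2\otimes\mathrm{id})(\rho_{AB})\|_1$; $\|\cdot\|_1$ is the trace norm. A pure state on $\mathbb{C}^6\otimes\mathbb{C}^6$ is maximally entangled if its reduced states are $\mathbb{I}_6/6$. *)

From HB Require Import structures.
From mathcomp Require Import all_boot all_order all_algebra.
From mathcomp Require Import fingroup perm complex mxtens.
Set Implicit Arguments. Unset Strict Implicit. Unset Printing Implicit Defensive.
Import Order.TTheory GRing.Theory Num.Theory.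
Local Open Scope ring_scope.
Local Open Scope complex_scope.

Definition adj (R : rcfType) (m n : nat) (A : 'M[R[i]]_(m, n)) : 'M[R[i]]_(n, m) :=
  map_mx (@conjc R) A^T.

Definition unitary (R : rcfType) (n : nat) (U : 'M[R[i]]_n) : Prop :=
  U *m adj U = 1%:M /\ adj U *m U = 1%:M.

Definition density (R : rcfType) (n : nat) (rho : 'M[R[i]]_n) : Prop :=
  adj rho = rho /\
  (forall v : 'cV[R[i]]_n, 0 <= (adj v *m rho *m v) 0 0) /\
  \tr rho = 1.

(* trace norm: ||A||_1 = sum of the singular values of A, i.e.
   trace_norm_is A t  iff  A = U diag(d) V with U, V unitary, d >= 0, t = sum d. *)
Definition trace_norm_is (R : rcfType) (n : nat) (A : 'M[R[i]]_n) (t : R) : Prop :=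
  exists (U V : 'M[R[i]]_n) (d : 'rV[R]_n),
    [/\ unitary U, unitary V, (forall j, 0 <= d 0 j),
        A = U *m diag_mx (map_mx (fun x : R => x%:C) d) *m V
      & t = \sum_j d 0 j].

Definition swap6 (R : rcfType) (j : 'I_6) : 'M[R[i]]_6 := perm_mx (tperm 0 j).

(* Kraus operators: Lbar_1 = I, Lbar_2 = swap(0,1), Lbar_3 = swap(0,2);
   Sbar_1 = swap(0,3), Sbar_2 = swap(0,4), Sbar_3 = swap(0,5).  k : 'I_3 indexes k = 1,2,3. *)
Definition Lbar (R : rcfType) (k : 'I_3) : 'M[R[i]]_6 := swap6 R (inord k).
Definition Sbar (R : rcfType) (k : 'I_3) : 'M[R[i]]_6 := swap6 R (inord (k + 3)).

Definition mixunitary (R : rcfType) (q : 'I_3 -> R) (K : 'I_3 -> 'M[R[i]]_6)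
  (rho : 'M[R[i]]_6) : 'M[R[i]]_6 :=
  \sum_(k < 3) (q k)%:C *: (K k *m rho *m adj (K k)).

Definition mixunitary_tens_id (R : rcfType) (q : 'I_3 -> R) (K : 'I_3 -> 'M[R[i]]_6)
  (X : 'M[R[i]]_(6 * 6)) : 'M[R[i]]_(6 * 6) :=
  \sum_(k < 3) (q k)%:C *: ((K k *t (1%:M : 'M[R[i]]_6)) *m X
                            *m adj (K k *t (1%:M : 'M[R[i]]_6))).

Definition proj (R : rcfType) (n : nat) (psi : 'cV[R[i]]_n) : 'M[R[i]]_n := psi *m adj psi.

Definition ptraceB (R : rcfType) (m n : nat) (X : 'M[R[i]]_(m * n)) : 'M[R[i]]_m :=
  \matrix_(a, a') \sum_(b < n) X (mxtens_index (a, b)) (mxtens_index (a', b)).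
Definition ptraceA (R : rcfType) (m n : nat) (X : 'M[R[i]]_(m * n)) : 'M[R[i]]_n :=
  \matrix_(b, b') \sum_(a < m) X (mxtens_index (a, b)) (mxtens_index (a, b')).

Definition max_entangled (R : rcfType) (psi : 'cV[R[i]]_(6 * 6)) : Prop :=
  adj psi *m psi = 1%:M /\
  ptraceB (proj psi) = (6%:R)^-1 *: 1%:M /\
  ptraceA (proj psi) = (6%:R)^-1 *: 1%:M.

(* Probing with |0>, the Lbar_k send it to |0>, |1>, |2> and the Sbar_k to |3>, |4>, |5>, so
   the two outputs have orthogonal supports and the trace distance is maximal, namely 2.
   With a maximally entangled probe psi both outputs are mixtures of the pure states
   a_k = (Lbar_k (x) 1) psi and b_k = (Sbar_k (x) 1) psi, and since Lbar_1 = 1 the overlap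
   <a_1|b_1> = tr(Sbar_1) / 6 = 2/3 is nonzero.  For such mixtures A, writing the trace norm
   as tr(A (W + W^* )) / 2 with W unitary gives
     4 - 2 ||A||_1 = sum_k q_k (||W a_k - a_k||^2 + ||W b_k + b_k||^2),
   and the k = 1 term vanishes only if W fixes a_1 and negates b_1, which would make them
   orthogonal.  Hence ||A||_1 < 2. *)

From HB Require Import structures.
From mathcomp Require Import all_boot all_order all_algebra.
From mathcomp Require Import fingroup perm complex mxtens.
From mathcomp Require Import lra ring zify.
Set Implicit Arguments. Unset Strict Implicit. Unset Printing Implicit Defensive.
Import Order.TTheory GRing.Theory Num.Theory.
Local Open Scope ring_scope.
Local Open Scope complex_scope.

Section Adjoint.
Variable R : rcfType.
Local Notation C := R[i].

Lemma adjM m n p (A : 'M[C]_(m, n)) (B : 'M[C]_(n, p)) :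
  adj (A *m B) = adj B *m adj A.
Proof. by rewrite /adj trmx_mul map_mxM. Qed.

Lemma adjK m n (A : 'M[C]_(m, n)) : adj (adj A) = A.
Proof. by apply/matrixP => i j; rewrite /adj !mxE conjcK. Qed.

Lemma adjD m n (A B : 'M[C]_(m, n)) : adj (A + B) = adj A + adj B.
Proof. by apply/matrixP => i j; rewrite /adj !mxE rmorphD. Qed.

Lemma adjB m n (A B : 'M[C]_(m, n)) : adj (A - B) = adj A - adj B.
Proof. by apply/matrixP => i j; rewrite /adj !mxE rmorphB. Qed.

Lemma adjZ m n (c : C) (A : 'M[C]_(m, n)) : adj (c *: A) = conjc c *: adj A.
Proof. by apply/matrixP => i j; rewrite /adj !mxE rmorphM. Qed.

Lemma adj_sum m n I (r : seq I) (P : pred I) (F : I -> 'M[C]_(m, n)) :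
  adj (\sum_(k <- r | P k) F k) = \sum_(k <- r | P k) adj (F k).
Proof.
elim/big_rec2: _ => [|k x y _ <-]; last by rewrite adjD.
by apply/matrixP => i j; rewrite /adj !mxE conjc0.
Qed.

Lemma adj_tens m n p r (A : 'M[C]_(m, n)) (B : 'M[C]_(p, r)) :
  adj (A *t B) = adj A *t adj B.
Proof. by rewrite /adj trmx_tens map_mxT. Qed.

Lemma adj1 n : adj (1%:M : 'M[C]_n) = 1%:M.
Proof. by apply/matrixP => i j; rewrite /adj !mxE rmorphMn rmorph1 eq_sym. Qed.

Lemma adj_perm_mx n (s : 'S_n) : adj (perm_mx s : 'M[C]_n) = perm_mx s^-1.
Proof. by rewrite /adj tr_perm_mx map_perm_mx. Qed.

Lemma adj_delta m n (i : 'I_m) (j : 'I_n) :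
  adj (delta_mx i j : 'M[C]_(m, n)) = delta_mx j i.
Proof.
apply/matrixP => a b; rewrite /adj !mxE andbC.
by case: (_ && _); rewrite ?conjc0 ?conjc1.
Qed.

Lemma adj_proj n (x : 'cV[C]_n) : adj (proj x) = proj x.
Proof. by rewrite /proj adjM adjK. Qed.

Lemma adj_diag_real n (d : 'rV[R]_n) :
  adj (diag_mx (map_mx (fun x : R => x%:C) d))
  = diag_mx (map_mx (fun x : R => x%:C) d).
Proof.
apply/matrixP => i j; rewrite /adj !mxE.
by case: (eqVneq i j) => [->|_]; rewrite ?mulr1n ?conjc_real // !mulr0n conjc0.
Qed.

Lemma perm_mx_isometry n (s : 'S_n) : adj (perm_mx s : 'M[C]_n) *m perm_mx s = 1%:M.
Proof. by rewrite adj_perm_mx -perm_mxM mulVg perm_mx1. Qed.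

Lemma tens1mx m n : (1%:M : 'M[C]_m) *t (1%:M : 'M[C]_n) = 1%:M.
Proof.
apply/matrixP => i j.
case: (mxtens_indexP i) => i1 i2; case: (mxtens_indexP j) => j1 j2.
rewrite tensmxE !mxE (can_eq (@mxtens_indexK m n)) xpair_eqE.
by case: (i1 == j1); case: (i2 == j2); rewrite /= ?mulr1 ?mulr0 ?mul0r.
Qed.

Lemma tens1_isometry m n (K : 'M[C]_m) :
  adj K *m K = 1%:M -> adj (K *t (1%:M : 'M[C]_n)) *m (K *t 1%:M) = 1%:M.
Proof. by move=> hK; rewrite adj_tens tensmx_mul hK adj1 mulmx1 tens1mx. Qed.

Lemma isometry_mul n (W : 'M[C]_n) (x : 'cV[C]_n) :
  adj W *m W = 1%:M -> adj x *m x = 1%:M -> adj (W *m x) *m (W *m x) = 1%:M.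
Proof. by move=> hW hx; rewrite adjM -mulmxA (mulmxA (adj W)) hW mul1mx. Qed.

End Adjoint.

Section Braket.
Variable R : rcfType.
Local Notation C := R[i].

Definition braket n (x y : 'cV[C]_n) : C := (adj x *m y) 0 0.

Lemma braket_self_ge0 n (x : 'cV[C]_n) : 0 <= braket x x.
Proof.
rewrite /braket mxE; apply: sumr_ge0 => i _; rewrite /adj !mxE mulrC.
exact: mulcJ_ge0.
Qed.

Lemma braket_self_eq0 n (x : 'cV[C]_n) : braket x x = 0 -> x = 0.
Proof.
rewrite /braket mxE => /eqP; rewrite psumr_eq0 => [/allP x0|i _]; last first.
  by rewrite /adj !mxE mulrC; exact: mulcJ_ge0.
apply/matrixP => i j; rewrite [j]ord1 mxE.
have := x0 i (mem_index_enum _); rewrite /adj !mxE mulf_eq0 conjc_eq0.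
by rewrite orbb => /eqP.
Qed.

Lemma braket_isometry n (W : 'M[C]_n) (x y : 'cV[C]_n) :
  adj W *m W = 1%:M -> braket (W *m x) (W *m y) = braket x y.
Proof. by move=> hW; rewrite /braket adjM -mulmxA (mulmxA (adj W)) hW mul1mx. Qed.

Lemma mxtrace_proj_mul n (x : 'cV[C]_n) (X : 'M[C]_n) :
  \tr (proj x *m X) = braket x (X *m x).
Proof. by rewrite /proj -mulmxA mxtrace_mulC /mxtrace big_ord1 /braket mulmxA. Qed.

End Braket.

Section TraceNormBound.
Variable R : rcfType.
Local Notation C := R[i].

Lemma braket_sym_isometryB n (W : 'M[C]_n) (x : 'cV[C]_n) :
  adj W *m W = 1%:M -> adj x *m x = 1%:M ->
  braket x ((W + adj W) *m x) = 2 - braket (W *m x - x) (W *m x - x).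
Proof.
move=> hW hx; rewrite /braket !(adjB, adjD, adjM).
rewrite !(mulmxBl, mulmxBr, mulmxDl, mulmxDr, mulmxN).
have -> : adj x *m adj W *m (W *m x) = 1%:M by rewrite -adjM isometry_mul.
by rewrite hx !mulmxA !mxE /=; ring.
Qed.

Lemma braket_sym_isometryD n (W : 'M[C]_n) (x : 'cV[C]_n) :
  adj W *m W = 1%:M -> adj x *m x = 1%:M ->
  braket x ((W + adj W) *m x) = braket (W *m x + x) (W *m x + x) - 2.
Proof.
move=> hW hx; rewrite /braket !(adjB, adjD, adjM).
rewrite !(mulmxBl, mulmxBr, mulmxDl, mulmxDr, mulmxN).
have -> : adj x *m adj W *m (W *m x) = 1%:M by rewrite -adjM isometry_mul.
by rewrite hx !mulmxA !mxE /=; ring.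
Qed.

(* Otherwise [W] fixes [a] and negates [b], which forces [<a|b> = - <a|b>]. *)
Lemma isometry_fix_flip_gt0 n (W : 'M[C]_n) (a b : 'cV[C]_n) :
  adj W *m W = 1%:M -> braket a b != 0 ->
  0 < braket (W *m a - a) (W *m a - a) + braket (W *m b + b) (W *m b + b).
Proof.
move=> hW hab; rewrite lt_def addr_ge0 ?braket_self_ge0 // andbT.
apply: contra hab; rewrite paddr_eq0 ?braket_self_ge0 //.
case/andP=> /eqP/braket_self_eq0/eqP + /eqP/braket_self_eq0/eqP.
rewrite subr_eq0 addr_eq0 => /eqP Wa /eqP Wb.
have : braket a b = - braket a b.
  by rewrite -{1}(braket_isometry a b hW) Wa Wb /braket mulmxN mxE.
by move/eqP; rewrite -addr_eq0 -mulr2n mulrn_eq0.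
Qed.

(* [D = U^* A V^*] is real diagonal, so [tr D = tr (A W) = tr (A W^* )] for [W = V^* U^*]. *)
Lemma trace_norm_is_hermitian n (A : 'M[C]_n) (t : R) :
  adj A = A -> trace_norm_is A t ->
  exists2 W : 'M[C]_n, adj W *m W = 1%:M & t%:C *+ 2 = \tr (A *m (W + adj W)).
Proof.
move=> hA [U [V [d [[hU1 hU2] [hV1 hV2] _ defA ->]]]].
set D := diag_mx _ in defA.
have defD : D = adj U *m A *m adj V.
  by rewrite defA !mulmxA hU2 mul1mx -mulmxA hV1 mulmx1.
have trD : (\sum_j d 0 j)%:C = \tr D.
  by rewrite mxtrace_diag rmorph_sum; apply: eq_bigr => j _; rewrite mxE.
exists (adj V *m adj U).
  by rewrite adjM !adjK !mulmxA -(mulmxA U) hV1 mulmx1 hU1.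
rewrite mulmxDr mxtraceD adjM !adjK trD.
have -> : \tr (A *m (adj V *m adj U)) = \tr D.
  by rewrite defD -mulmxA [RHS]mxtrace_mulC !mulmxA.
have -> : \tr (A *m (U *m V)) = \tr D.
  have hermD : adj D = D by exact: adj_diag_real.
  by rewrite -hermD defD !adjM !adjK hA [RHS]mxtrace_mulC !mulmxA.
by rewrite mulr2n.
Qed.

Lemma mxtrace_mix_proj_mul I (r : seq I) n (c : I -> C) (x : I -> 'cV[C]_n)
    (X : 'M[C]_n) :
  \tr ((\sum_(k <- r) c k *: proj (x k)) *m X)
  = \sum_(k <- r) c k * braket (x k) (X *m x k).
Proof.
rewrite mulmx_suml linear_sum; apply: eq_bigr => k _ /=.
by rewrite -scalemxAl mxtraceZ mxtrace_proj_mul.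
Qed.

Lemma mix_pure_trace_norm_lt2 (I : finType) n (q : I -> R) (a b : I -> 'cV[C]_n)
    (i0 : I) (t : R) :
  (forall k, 0 <= q k) -> \sum_k q k = 1 -> 0 < q i0 ->
  (forall k, adj (a k) *m a k = 1%:M) -> (forall k, adj (b k) *m b k = 1%:M) ->
  braket (a i0) (b i0) != 0 ->
  trace_norm_is (\sum_k (q k)%:C *: proj (a k) - \sum_k (q k)%:C *: proj (b k)) t ->
  t < 2.
Proof.
move=> q_ge0 q_sum q_i0 a_unit b_unit ab_i0.
set A := _ - _ => tA.
have herm : adj A = A.
  by rewrite adjB !adj_sum; congr (_ - _); apply: eq_bigr => k _;
    rewrite adjZ conjc_real adj_proj.
have [W hW trA] := trace_norm_is_hermitian herm tA.
pose defect k := braket (W *m a k - a k) (W *m a k - a k)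
                 + braket (W *m b k + b k) (W *m b k + b k).
have defect_ge0 k : 0 <= defect k by rewrite addr_ge0 ?braket_self_ge0.
have tE : ((4 - t *+ 2)%:C : C) = \sum_k (q k)%:C * defect k.
  rewrite rmorphB !rmorphMn rmorph1 trA mulmxBl linearB /=.
  rewrite !mxtrace_mix_proj_mul -sumrB.
  have -> : 4 = \sum_k (q k)%:C * 4 :> C.
    by rewrite -mulr_suml -rmorph_sum q_sum /= mul1r.
  rewrite -sumrB; apply: eq_bigr => k _.
  rewrite braket_sym_isometryB // braket_sym_isometryD // /defect; ring.
have : 0 < \sum_k (q k)%:C * defect k.
  rewrite (bigD1 i0) //= -[X in X < _]addr0; apply: ltr_leD.
    by rewrite mulr_gt0 ?ltcR ?isometry_fix_flip_gt0.
  by apply: sumr_ge0 => k _; rewrite mulr_ge0 ?lecR ?q_ge0 ?defect_ge0.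
rewrite -tE ltcR; lra.
Qed.

End TraceNormBound.

Section EntangledProbe.
Variable R : rcfType.
Local Notation C := R[i].

Lemma sum_mxtens_index m n (F : 'I_(m * n) -> C) :
  \sum_(x < m * n) F x = \sum_(i < m) \sum_(j < n) F (mxtens_index (i, j)).
Proof.
rewrite pair_big /= (reindex (@mxtens_index m n)) /=; first by apply: eq_bigr => -[].
by exists (@mxtens_unindex m n) => x _; rewrite (mxtens_indexK, mxtens_unindexK).
Qed.

Lemma braket_tens1mx m n (K : 'M[C]_m) (psi : 'cV[C]_(m * n)) :
  braket psi ((K *t (1%:M : 'M[C]_n)) *m psi) = \tr (K *m ptraceB (proj psi)).
Proof.
rewrite /braket mxE sum_mxtens_index /mxtrace; apply: eq_bigr => i _.
transitivity (\sum_(j < n) \sum_(k < m)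
    (psi (mxtens_index (i, j)) 0)^* * (K i k * psi (mxtens_index (k, j)) 0)).
  apply: eq_bigr => j _; rewrite /adj !mxE sum_mxtens_index mulr_sumr.
  apply: eq_bigr => k _; rewrite (bigD1 j) //= big1 => [|l /negPf jl]; last first.
    by rewrite tensmxE mxE eq_sym jl mulr0n mulr0 mul0r.
  by rewrite tensmxE !mxE eqxx mulr1n mulr1 addr0.
rewrite mxE exchange_big /=; apply: eq_bigr => k _.
rewrite mxE mulr_sumr; apply: eq_bigr => j _.
rewrite /proj mxE big_ord1 /adj !mxE; ring.
Qed.

Lemma max_entangled_braket_tens1mx (K : 'M[C]_6) (psi : 'cV[C]_(6 * 6)) :
  max_entangled psi -> braket psi ((K *t (1%:M : 'M[C]_6)) *m psi) = \tr K / 6.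
Proof.
by case=> _ [trB _]; rewrite braket_tens1mx trB -scalemxAr mulmx1 mxtraceZ mulrC.
Qed.

Lemma mxtrace_perm_mx n (s : 'S_n) :
  \tr (perm_mx s : 'M[C]_n) = #|[pred i | s i == i]|%:R.
Proof.
rewrite -sum1_card natr_sum big_mkcond /mxtrace; apply: eq_bigr => i _.
by rewrite !mxE inE; case: eqP.
Qed.

Lemma mxtrace_swap6_neq0 (j : 'I_6) : \tr (swap6 R j) != 0.
Proof.
have [i i0 ij] : exists2 i : 'I_6, i != 0 & i != j.
  case: (eqVneq j (inord 1)) => [->|j1].
    by exists (inord 2); rewrite -val_eqE /= !inordK.
  by exists (inord 1); rewrite 1?eq_sym // -val_eqE /= inordK.
rewrite mxtrace_perm_mx pnatr_eq0 -lt0n; apply/card_gt0P; exists i.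
by rewrite inE tpermD // eq_sym.
Qed.

Lemma Lbar0 : Lbar R 0 = 1%:M.
Proof.
rewrite /Lbar /swap6 (_ : inord 0 = 0) ?tperm1 ?perm_mx1 //.
by apply: val_inj; rewrite /= inordK.
Qed.

Lemma mixunitary_tens_id_proj (q : 'I_3 -> R) (K : 'I_3 -> 'M[C]_6) psi :
  mixunitary_tens_id q K (proj psi)
  = \sum_k (q k)%:C *: proj ((K k *t (1%:M : 'M[C]_6)) *m psi).
Proof. by apply: eq_bigr => k _; rewrite /proj adjM !mulmxA. Qed.

Lemma max_entangled_trace_norm_lt2 (q : 'I_3 -> R) (psi : 'cV[C]_(6 * 6)) (t : R) :
  (forall k, 0 <= q k) -> 0 < q 0 -> \sum_k q k = 1 -> max_entangled psi ->
  trace_norm_is (mixunitary_tens_id q (@Lbar R) (proj psi)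
                 - mixunitary_tens_id q (@Sbar R) (proj psi)) t -> t < 2.
Proof.
move=> q_ge0 q0 q_sum ent; rewrite !mixunitary_tens_id_proj.
have unit_psi : adj psi *m psi = 1%:M by case: ent.
apply: (mix_pure_trace_norm_lt2 q_ge0 q_sum q0) => [k|k|].
- by apply: isometry_mul => //; apply/tens1_isometry/perm_mx_isometry.
- by apply: isometry_mul => //; apply/tens1_isometry/perm_mx_isometry.
rewrite Lbar0 tens1mx mul1mx max_entangled_braket_tens1mx //.
by rewrite mulf_neq0 ?invr_eq0 ?pnatr_eq0 ?mxtrace_swap6_neq0.
Qed.

End EntangledProbe.

Section SingleProbe.
Variable R : rcfType.
Local Notation C := R[i].

Lemma density_proj n (x : 'cV[C]_n) : adj x *m x = 1%:M -> density (proj x).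
Proof.
move=> unit_x; split; first exact: adj_proj.
split; last by rewrite /proj mxtrace_mulC unit_x mxtrace1.
move=> v; have -> : adj v *m proj x *m v = adj (adj x *m v) *m (adj x *m v).
  by rewrite adjM adjK /proj !mulmxA.
exact: braket_self_ge0.
Qed.

Lemma trace_norm_is_diag n (c : 'rV[R]_n) :
  trace_norm_is (diag_mx (map_mx (fun x : R => x%:C) c)) (\sum_j `|c 0 j|).
Proof.
pose s := \row_j (if 0 <= c 0 j then 1 else -1 : C).
have s_herm : adj (diag_mx s) = diag_mx s.
  apply/matrixP => i j; rewrite /adj !mxE; case: (eqVneq i j) => [->|_].
    by case: ifP; rewrite !mulr1n ?conjc1 ?rmorphN1.
  by rewrite !mulr0n conjc0.
have s_unitary : unitary (diag_mx s).
  have s2 : diag_mx s *m diag_mx s = 1%:M.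
    rewrite mulmx_diag -diag_const_mx; congr diag_mx; apply/rowP => j.
    by rewrite !mxE; case: ifP; rewrite ?mulr1 ?mulN1r ?opprK.
  by split; rewrite s_herm.
exists (diag_mx s), 1%:M, (map_mx Num.norm c); split => //.
- by split; rewrite adj1 mul1mx.
- by move=> j; rewrite mxE.
- rewrite mulmx1 mulmx_diag; congr diag_mx; apply/rowP => j; rewrite !mxE.
  case: ifP => [/ger0_norm -> | /negbT]; first by rewrite mul1r.
  by rewrite -ltNge => /ltr0_norm ->; rewrite rmorphN mulN1r opprK.
- by apply: eq_bigr => j _; rewrite mxE.
Qed.

Lemma mixunitary_proj (q : 'I_3 -> R) (K : 'I_3 -> 'M[C]_6) (x : 'cV[C]_6) :
  mixunitary q K (proj x) = \sum_k (q k)%:C *: proj (K k *m x).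
Proof. by apply: eq_bigr => k _; rewrite /proj adjM !mulmxA. Qed.

Lemma swap6_delta (j : 'I_6) : swap6 R j *m (delta_mx 0 0 : 'cV[C]_6) = delta_mx j 0.
Proof.
apply/matrixP => i k; rewrite /swap6 -row_permE !mxE.
by rewrite (canF_eq (tpermK 0 j)) tpermL.
Qed.

Lemma proj_delta n (j : 'I_n) : proj (delta_mx j 0 : 'cV[C]_n) = delta_mx j j.
Proof. by rewrite /proj adj_delta mul_delta_mx. Qed.

Lemma mixunitary_delta0_diff (q : 'I_3 -> R) :
  mixunitary q (@Lbar R) (proj (delta_mx 0 0))
    - mixunitary q (@Sbar R) (proj (delta_mx 0 0))
  = diag_mx (map_mx (fun x : R => x%:C) (row_mx (\row_k q k) (\row_k - q k))).
Proof.
rewrite !mixunitary_proj diag_mx_sum_delta big_split_ord /= -sumrN.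
(* The split indices live in ['I_(3 + 3)]; [done] stalls on converting them to ['I_6]. *)
congr (_ + _); apply: eq_bigr => k _; rewrite swap6_delta proj_delta mxE.
  have -> : inord k = lshift 3 k :> 'I_6.
    by apply: val_inj; have k3 := ltn_ord k; rewrite /= inordK //; lia.
  rewrite row_mxEl mxE; reflexivity.
have -> : inord (k + 3) = rshift 3 k :> 'I_6.
  by apply: val_inj; have k3 := ltn_ord k; rewrite /= inordK; lia.
rewrite row_mxEr !mxE rmorphN scaleNr; reflexivity.
Qed.

Lemma trace_norm_delta0 (q : 'I_3 -> R) :
  (forall k, 0 <= q k) -> \sum_k q k = 1 ->
  trace_norm_is (mixunitary q (@Lbar R) (proj (delta_mx 0 0))
                 - mixunitary q (@Sbar R) (proj (delta_mx 0 0))) 2.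
Proof.
move=> q_ge0 q_sum; rewrite mixunitary_delta0_diff.
set c := row_mx _ _; have -> : 2 = \sum_j `|c 0 j|.
  have -> : 2 = \sum_k q k + \sum_k q k :> R by rewrite q_sum -mulr2n.
  rewrite big_split_ord /=.
  by congr (_ + _); apply: eq_bigr => k _;
    rewrite ?row_mxEl ?row_mxEr !mxE ?normrN ger0_norm.
exact: trace_norm_is_diag.
Qed.

End SingleProbe.

Theorem theorem9 (R : rcfType) (q : 'I_3 -> R)
  (hq : forall k, 0 < q k < 1) (hsum : \sum_(k < 3) q k = 1) :
  exists rho : 'M[R[i]]_6, density rho /\
    exists t : R,
      trace_norm_is (mixunitary q (@Lbar R) rho - mixunitary q (@Sbar R) rho) t /\
      forall psi : 'cV[R[i]]_(6 * 6), max_entangled psi ->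
      forall t' : R,
        trace_norm_is (mixunitary_tens_id q (@Lbar R) (proj psi)
                       - mixunitary_tens_id q (@Sbar R) (proj psi)) t' ->
        1 / 2 + 1 / 4 * t' < 1 / 2 + 1 / 4 * t.
Proof.
have q_gt0 k : 0 < q k by case/andP: (hq k).
have q_ge0 k : 0 <= q k by exact: ltW (q_gt0 k).
exists (proj (delta_mx 0 0)); split.
  by apply: density_proj; rewrite adj_delta mul_delta_mx [LHS]mx11_scalar mxE.
exists 2; split; first exact: trace_norm_delta0.
move=> psi ent t' tA.
have := max_entangled_trace_norm_lt2 q_ge0 (q_gt0 0) hsum ent tA; lra.
Qed.
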